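(* Let $A=(A_n(x))_{n\ge0}$ be an Appell sequence with exponential generating function $\sum_{k\ge0}A_k(x)t^k/k!=e^{xt}f_A(t)$, and write $\log f_A(t)=\sum_{k\ge1}c_k t^k/k!$. Let $\varphi_A:\Lambda\to\mathbb{R}[x]$ be the ring homomorphism with $\varphi_A(h_m)=A_m/m!$ for $m\ge1$. Then $\varphi_A(p_1)=x+c_1$ and $\varphi_A(p_n)=c_n/(n-1)!$ for all $n\ge2$.
   Context: An Appell sequence is a sequence of real polynomials $(A_n)_{n\ge0}$ with $A_0=1$ and $A_n'=nA_{n-1}$ for $n\ge1$; then $f_A(t)=\sum_k A_k(0)t^k/k!$ is a formal power series with $f_A(0)=1$. $\Lambda$ is the ring of symmetric functions, freely generated by the complete homogeneous symmetric functions $h_m$; $p_n=\sum_i x_i^n$ is the $n$-th power sum symmetric function. *)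

From HB Require Import structures.
From mathcomp Require Import all_boot all_order all_algebra.
From mathcomp Require Import mpoly.
Set Implicit Arguments. Unset Strict Implicit. Unset Printing Implicit Defensive.
Import Order.TTheory GRing.Theory Num.Theory.
Local Open Scope ring_scope.

Definition appell (R : realFieldType) (A : nat -> {poly R}) : Prop :=
  A 0%N = 1 /\ forall n : nat, (0 < n)%N -> (A n)^`() = (A n.-1) *+ n.

(* Truncation to degree <= K of f_A(t) = sum_k A_k(0) t^k / k!. *)
Definition fA_trunc (R : realFieldType) (A : nat -> {poly R}) (K : nat) : {poly R} :=
  \sum_(i < K.+1) ((A i).[0] / (i`!)%:R) *: 'X^i.

(* Truncation (exact up to degree K) of log f_A(t) = sum_{j>=1} (-1)^(j+1) (f_A - 1)^j / j;
   since f_A(0) = 1, the terms with j > K only contribute in degree > K. *)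
Definition logfA_trunc (R : realFieldType) (A : nat -> {poly R}) (K : nat) : {poly R} :=
  \sum_(j < K) (((-1) ^+ j) / (j.+1)%:R) *: (fA_trunc A K - 1) ^+ j.+1.

Definition appell_c (R : realFieldType) (A : nat -> {poly R}) (k : nat) : R :=
  (k`!)%:R * (logfA_trunc A k)`_k.

Definition hsym (N m : nat) : {mpoly int[N]} :=
  \sum_(mm : 'X_{1..N < m.+1} | mdeg mm == m) 'X_[mm].

Definition psum (N n : nat) : {mpoly int[N]} := \sum_(i < N) 'X_i ^+ n.

Definition sym_ring_hom (R : realFieldType) (N : nat) (phi : {mpoly int[N]} -> {poly R}) : Prop :=
  [/\ phi 1 = 1,
      forall p q, p \is symmetric -> q \is symmetric -> phi (p + q) = phi p + phi q
    & forall p q, p \is symmetric -> q \is symmetric -> phi (p * q) = phi p * phi q].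

From HB Require Import structures.
From mathcomp Require Import all_boot all_order all_algebra.
From mathcomp Require Import mpoly.
From mathcomp Require Import fingroup perm zify.
Import Order.TTheory GRing.Theory Num.Theory.
Local Open Scope ring_scope.

(* Newton's identity n h_n = sum_(j < n) p_(n-j) h_j holds in any number of
   variables; applying phi and using phi(h_j) = A_j/j! =: B_j with B_0 = 1, it
   determines phi(p_1), ..., phi(p_N) one after another.  On the Appell side,
   with a_k = A_k(0)/k! and d_i = c_i/(i-1)! the coefficients of f_A and of
   (log f_A)', the identity f_A' = f_A (log f_A)' reads
   k a_k = sum_(j < k) d_(k-j) a_j.  Since B_(n+1)' = B_n and B_n(0) = a_n,
   comparing derivatives and values at 0 lifts it to
   n B_n = sum_(j < n) q_(n-j) B_j  with q_1 = x + d_1 and q_i = d_i for i >= 2,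
   so phi(p_i) = q_i. *)

Lemma convolution_cancel {T : pzRingType} (e u v : nat -> T) (M : nat) :
  e 0%N = 1 ->
  (forall n, (0 < n <= M)%N ->
     \sum_(j < n) u (n - j)%N * e j = \sum_(j < n) v (n - j)%N * e j) ->
  forall n, (0 < n <= M)%N -> u n = v n.
Proof.
move=> e0 huv; elim/ltn_ind=> -[//|n] IH /andP[_ nM].
have := huv n.+1 nM; rewrite !big_ord_recl e0 !mulr1 subn0.
under eq_bigr => j _ do rewrite /= /bump add1n subSS IH ?subn_gt0 ?ltn_ord
  ?(leq_trans (leq_subr _ _) (ltnW nM)) ?ltnS ?leq_subr //.
by move/addIr.
Qed.

Lemma mcoeff_mpolyXM (N : nat) (u m : 'X_{1..N}) (p : {mpoly int[N]}) :
  ('X_[u] * p)@_m = if (u <= m)%MM then p@_(m - u) else 0.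
Proof.
case: ifP => [um|not_um].
  by rewrite -{1}(submK um) addmC -(commr_mpolyX u p) mcoeffMX.
rewrite {1}(mpolyE p) mulr_sumr raddf_sum big1 // => mm _.
rewrite /= -scalerAr -mpolyXD mcoeffZ mcoeffX.
case: eqP => [um|]; last by rewrite mulr0.
by rewrite -um lem_addr in not_um.
Qed.

Section Newton.
Variable N : nat.

Lemma mcoeff_hsym k m : (hsym N k)@_m = (mdeg m == k)%:R.
Proof.
rewrite /hsym raddf_sum /=.
under eq_bigr => mm _ do rewrite mcoeffX.
have [mk|mNk] := boolP (mdeg m == k).
  have mk' : (mdeg m < k.+1)%N by rewrite (eqP mk).
  rewrite (bigD1 (BMultinom mk')) //= eqxx big1 ?addr0 // => mm /andP[_ ne].
  by move: ne; rewrite bmeqP /= => /negbTE ->.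
rewrite big1 // => mm /eqP mmk; case: eqP => // mmm.
by rewrite -mmm mmk eqxx in mNk.
Qed.

Lemma hsym0 : hsym N 0 = 1.
Proof. by apply/mpolyP => m; rewrite mcoeff_hsym mcoeff1 mdeg_eq0. Qed.

Lemma hsym_sym k : hsym N k \is symmetric.
Proof.
by apply/issymP => s; apply/mpolyP => m; rewrite mcoeff_sym !mcoeff_hsym mdeg_mperm.
Qed.

Lemma psum_sym k : psum N k \is symmetric.
Proof.
apply/issymP => s; rewrite /psum raddf_sum /=.
under eq_bigr => i _ do rewrite rmorphXn /= msymX.
rewrite (reindex_inj (@perm_inj _ s^-1)%g) /=.
apply: eq_bigr => i _; congr ('X_[_] ^+ _).
by apply/mnmP => j; rewrite mnmE !mnm1E -(inj_eq (@perm_inj _ s)) !permKV.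
Qed.

Lemma mcoeff_XnM_hsym (i : 'I_N) k j m :
  ('X_i ^+ k * hsym N j)@_m = ((k <= m i)%N && (mdeg m - k == j)%N)%:R.
Proof.
have le_ki : (U_(i) *+ k <= m)%MM = (k <= m i)%N.
  apply/mnm_lepP/idP => [/(_ i)|ki j'].
    by rewrite mulmnE mnm1E eqxx mul1n.
  by rewrite mulmnE mnm1E; case: eqP => [<-|]; rewrite ?mul1n ?mul0n.
rewrite mpolyXn mcoeff_mpolyXM le_ki; case: ifP => //= ki.
have := congr1 mdeg (submK (m := U_(i) *+ k) (m' := m) _); rewrite le_ki => /(_ ki).
by rewrite mdegD mdegMn mdeg1 mul1n => <-; rewrite mcoeff_hsym addnK.
Qed.

Lemma sum_subn_le (n x : nat) : (\sum_(j < n) (n - j <= x)%N)%N = minn x n.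
Proof.
elim: n => [|n IH]; first by rewrite big_ord0; lia.
rewrite big_ord_recl /= subn0.
under eq_bigr => j _ do rewrite /bump /= add1n subSS.
rewrite IH; lia.
Qed.

Lemma leq_mnm_mdeg (m : 'X_{1..N}) i : (m i <= mdeg m)%N.
Proof. by rewrite mdegE (bigD1 i) //= leq_addr. Qed.

Lemma newton_count (m : 'X_{1..N}) n :
  (\sum_(j < n) \sum_(i < N) ((n - j <= m i)%N && (mdeg m - (n - j) == j)%N))%N
  = ((mdeg m == n) * n)%N.
Proof.
have [mn|mNn] := eqVneq (mdeg m) n; last first.
  rewrite big1 // => j _; rewrite big1 // => i _.
  case: andP => // -[le_jm /eqP eq_jm]; have := leq_mnm_mdeg m i.
  have := ltn_ord j; move: mNn => /eqP; lia.
under eq_bigr => j _ do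
  under eq_bigr => i _ do rewrite mn (subKn (ltnW (ltn_ord j))) eqxx andbT.
rewrite mul1n exchange_big /= -[RHS]mn mdegE; apply: eq_bigr => i _.
by rewrite sum_subn_le; have := leq_mnm_mdeg m i; rewrite mn; lia.
Qed.

Lemma hsym_newton n : \sum_(j < n) psum N (n - j) * hsym N j = hsym N n *+ n.
Proof.
apply/mpolyP => m; rewrite mcoeffMn mcoeff_hsym raddf_sum /=.
rewrite -[RHS]mulr_natr -[RHS]natrM -newton_count natr_sum; apply: eq_bigr => j _.
rewrite /psum mulr_suml raddf_sum natr_sum; apply: eq_bigr => i _.
exact: mcoeff_XnM_hsym.
Qed.

End Newton.

Section TruncatedLog.
Context {R : numFieldType}.

Definition log1p_trunc (K : nat) (G : {poly R}) : {poly R} :=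
  \sum_(j < K) ((-1) ^+ j / (j.+1)%:R) *: G ^+ j.+1.

Lemma deriv_log1p_trunc K G :
  (log1p_trunc K G)^`() = G^`() * \sum_(j < K) (- G) ^+ j.
Proof.
rewrite raddf_sum /= mulr_sumr; apply: eq_bigr => j _.
rewrite derivZ deriv_exp -scaler_nat scalerA divfK ?pnatr_eq0 //.
by rewrite /= [in RHS]exprNn scalerAr -mul_polyC polyC_exp polyCN.
Qed.

Lemma coef_mul_deriv_log1p_trunc K (G : {poly R}) i :
  G`_0 = 0 -> (i < K)%N -> ((1 + G) * (log1p_trunc K G)^`())`_i = G^`()`_i.
Proof.
move=> G0 iK; set Q := drop_poly 1 G.
have GK : (- G) ^+ K = (- Q) ^+ K * 'X^K.
  have GQ : G = Q * 'X.
    by apply/polyP => -[|k]; rewrite coefMX // coef_drop_poly addn1.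
  by rewrite GQ -mulNr exprMn.
have geom : (1 + G) * \sum_(j < K) (- G) ^+ j = 1 - (- G) ^+ K.
  by rewrite -[1 + G]opprK opprD addrC mulNr -subrX1 opprB.
by rewrite deriv_log1p_trunc mulrCA geom mulrBr mulr1 coefB GK mulrA coefMXn iK subr0.
Qed.

End TruncatedLog.

Lemma eq_poly_deriv (R : numDomainType) (p q : {poly R}) :
  p^`() = q^`() -> p.[0] = q.[0] -> p = q.
Proof.
move=> pq' pq0; apply/polyP => -[|i]; first by rewrite -!horner_coef0.
have /eqP : p^`()`_i = q^`()`_i by rewrite pq'.
by rewrite !coef_deriv eqrMn2r => /eqP.
Qed.

Section AppellDefs.
Context {R : realFieldType} (A : nat -> {poly R}).

Definition fA_coef k : R := (A k).[0] / (k`!)%:R.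
Definition logfA_deriv_coef n : R := (logfA_trunc A n)`_n *+ n.
Definition appell_divfact k : {poly R} := ((k`!)%:R)^-1 *: A k.
Definition psum_image n : {poly R} := 'X *+ (n == 1)%N + (logfA_deriv_coef n)%:P.

End AppellDefs.

Section AppellRecursions.
Context {R : realFieldType} {A : nat -> {poly R}}.
Local Notation fA_coef := (fA_coef A).
Local Notation logfA_deriv_coef := (logfA_deriv_coef A).
Local Notation appell_divfact := (appell_divfact A).
Local Notation psum_image := (psum_image A).

Lemma appell_c_div_fact n :
  (0 < n)%N -> appell_c A n / ((n.-1)`!)%:R = logfA_deriv_coef n.
Proof.
case: n => // n _; rewrite /appell_c /logfA_deriv_coef /= factS natrM mulrAC.
by rewrite mulfK ?mulr_natl // pnatr_eq0 -lt0n fact_gt0.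
Qed.

Lemma coef_fA_trunc K i :
  (fA_trunc A K)`_i = if (i <= K)%N then fA_coef i else 0.
Proof. by rewrite /fA_trunc -(poly_def _ fA_coef) coef_poly ltnS. Qed.

Hypothesis appellA : appell A.

Lemma fA_coef0 : fA_coef 0 = 1.
Proof. by rewrite /fA_coef (proj1 appellA) hornerC fact0 divr1. Qed.

Lemma fA_coef_rec_trunc K n : (0 < n <= K)%N ->
  \sum_(j < n) (logfA_trunc A K)`_(n - j) *+ (n - j) * fA_coef j = fA_coef n *+ n.
Proof.
case: n => // n /= nK.
have F0 : (fA_trunc A K - 1)`_0 = 0 by rewrite coefB coef_fA_trunc coef1 fA_coef0 subrr.
have -> : logfA_trunc A K = log1p_trunc K (fA_trunc A K - 1) by [].
have := coef_mul_deriv_log1p_trunc K _ n F0 nK.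
rewrite addrC subrK derivB derivC subr0 coef_deriv coef_fA_trunc nK => <-.
rewrite coefM; apply: eq_bigr => j _; have jn : (j <= n)%N by rewrite -ltnS.
by rewrite coef_fA_trunc (leq_trans jn (ltnW nK)) mulrC coef_deriv subSn.
Qed.

Lemma logfA_deriv_coef_trunc K n :
  (0 < n <= K)%N -> (logfA_trunc A K)`_n *+ n = logfA_deriv_coef n.
Proof.
case/andP=> n0 nK.
apply: (@convolution_cancel _ fA_coef (fun k => (logfA_trunc A K)`_k *+ k)
  (fun k => (logfA_trunc A n)`_k *+ k) n fA_coef0); last by rewrite n0 leqnn.
move=> k /andP[k0 kn]; rewrite !fA_coef_rec_trunc ?k0 ?kn //.
exact: leq_trans kn nK.
Qed.

Lemma fA_coef_rec n : (0 < n)%N ->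
  \sum_(j < n) logfA_deriv_coef (n - j) * fA_coef j = fA_coef n *+ n.
Proof.
move=> n0; rewrite -(@fA_coef_rec_trunc n n); last by rewrite n0 leqnn.
by apply: eq_bigr => j _; rewrite logfA_deriv_coef_trunc // subn_gt0 ltn_ord leq_subr.
Qed.

Lemma appell_divfact0 : appell_divfact 0 = 1.
Proof. by rewrite /appell_divfact (proj1 appellA) fact0 invr1 scale1r. Qed.

Lemma deriv_appell_divfact n : (appell_divfact n.+1)^`() = appell_divfact n.
Proof.
rewrite /appell_divfact derivZ (proj2 appellA) // -scaler_nat scalerA factS natrM.
by rewrite invfM mulrAC mulVf ?mul1r // pnatr_eq0.
Qed.

Lemma horner0_appell_divfact k : (appell_divfact k).[0] = fA_coef k.
Proof. by rewrite /appell_divfact hornerZ mulrC. Qed.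

Lemma appell_divfact_rec n :
  \sum_(j < n) psum_image (n - j)%N * appell_divfact j = appell_divfact n *+ n.
Proof.
have psum_image_deriv k : (psum_image k)^`() = (k == 1)%:R.
  by rewrite derivD derivMn derivX derivC addr0.
elim: n => [|n IH]; first by rewrite big_ord0 mulr0n.
apply: eq_poly_deriv.
  rewrite raddf_sum /= derivMn deriv_appell_divfact mulrS -IH.
  under eq_bigr => j _ do rewrite derivM psum_image_deriv.
  rewrite big_split /= big_ord_recr big_ord_recl /= subSnn mul1r.
  rewrite appell_divfact0 derivC mulr0 add0r.
  rewrite big1 ?add0r => [|j _]; last first.
    by rewrite subSn 1?ltnW // eqSS subn_eq0 leqNgt ltn_ord mul0r.
  congr (_ + _); apply: eq_bigr => j _.
  by rewrite /bump /= add1n subSS deriv_appell_divfact.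
rewrite horner_sum hornerMn horner0_appell_divfact -fA_coef_rec //.
apply: eq_bigr => j _.
by rewrite hornerM hornerD hornerMn hornerX mul0rn add0r hornerC horner0_appell_divfact.
Qed.

End AppellRecursions.

Section SymRingHom.
Context {R : realFieldType} {N : nat} {phi : {mpoly int[N]} -> {poly R}}.
Hypothesis phi_hom : sym_ring_hom phi.

Lemma sym_ring_hom1 : phi 1 = 1.
Proof. by case: phi_hom. Qed.

Lemma sym_ring_hom0 : phi 0 = 0.
Proof.
case: phi_hom => _ phiD _; apply: (@addrI _ (phi 0)).
by rewrite addr0 -phiD ?rpred0 // addr0.
Qed.

Lemma sym_ring_hom_sum n (F : 'I_n -> {mpoly int[N]}) :
  (forall j, F j \is symmetric) -> phi (\sum_j F j) = \sum_j phi (F j).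
Proof.
case: phi_hom => _ phiD _; elim: n F => [|n IH] F F_sym.
  by rewrite !big_ord0 sym_ring_hom0.
by rewrite !big_ord_recr /= phiD ?IH ?rpred_sum // => j _; exact: F_sym.
Qed.

Lemma sym_ring_hom_newton n :
  \sum_(j < n) phi (psum N (n - j)) * phi (hsym N j) = phi (hsym N n) *+ n.
Proof.
case: phi_hom => _ _ phiM.
have -> : phi (hsym N n) *+ n = phi (hsym N n *+ n).
  by rewrite -(card_ord n) -!sumr_const sym_ring_hom_sum // => _; exact: hsym_sym.
rewrite -hsym_newton sym_ring_hom_sum => [|j]; last first.
  by rewrite rpredM ?psum_sym ?hsym_sym.
by apply: eq_bigr => j _; rewrite phiM ?psum_sym ?hsym_sym.
Qed.

End SymRingHom.

Theorem proposition4p3 (R : realFieldType) (A : nat -> {poly R}) (N : nat)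
    (phi : {mpoly int[N]} -> {poly R}) :
  appell A ->
  sym_ring_hom phi ->
  (forall m : nat, (1 <= m <= N)%N -> phi (hsym N m) = ((m`!)%:R)^-1 *: A m) ->
  ((1 <= N)%N -> phi (psum N 1) = 'X + (appell_c A 1)%:P) /\
  (forall n : nat, (2 <= n <= N)%N ->
     phi (psum N n) = (appell_c A n / ((n.-1)`!)%:R)%:P).
Proof.
move=> appellA phi_hom phi_hsym.
have phi_h n : (n <= N)%N -> phi (hsym N n) = appell_divfact A n.
  case: n => [_|n nN]; last exact: phi_hsym.
  by rewrite hsym0 (sym_ring_hom1 phi_hom) (appell_divfact0 appellA).
have phi_psum : forall n, (0 < n <= N)%N -> phi (psum N n) = psum_image A n.
  apply: (convolution_cancel _ (fun n => phi (psum N n)) _ N (appell_divfact0 appellA)).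
  move=> k /andP[_ kN].
  rewrite (appell_divfact_rec appellA) -phi_h // -(sym_ring_hom_newton phi_hom).
  by apply: eq_bigr => j _; rewrite phi_h // (leq_trans (ltnW (ltn_ord j)) kN).
split=> [N1|n /andP[n2 nN]].
  by rewrite phi_psum ?N1 // /psum_image eqxx mulr1n -appell_c_div_fact // fact0 divr1.
rewrite phi_psum ?nN ?(ltnW n2) // /psum_image gtn_eqF // mulr0n add0r.
by rewrite appell_c_div_fact // ltnW.
Qed.
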